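(* Let $M$ be a matroid on $S$ and $N$ a matroid on $T$ with $S\cap T=\emptyset$, and let $L=M\mathbin{\Box} N$. Then for all $A\subseteq S\cup T$, $$\rho_L(A)=\rho_M(A\cap S)+\rho_N(A\cap T)+\min\{\lambda_M(A\cap S),\ \nu_N(A\cap T)\}.$$
   Context: For a matroid $M$ on $S$ write $\rho_M$ for rank, $\rho(M)=\rho_M(S)$, $\nu_M(A)=|A|-\rho_M(A)$ (nullity), $\lambda_M(A)=\rho(M)-\rho_M(A)$ (rank-lack). For matroids $M$ on $S$ and $N$ on $T$ with $S\cap T=\emptyset$, the free product $M\mathbin{\Box} N$ is the matroid on $S\cup T$ whose independent sets are those $A$ with $A\cap S$ independent in $M$ and $\lambda_M(A\cap S)\geq\nu_N(A\cap T)$. *)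

From mathcomp Require Import all_boot.
Set Implicit Arguments. Unset Strict Implicit. Unset Printing Implicit Defensive.

(* The ground set of a matroid is the finite type E itself. *)
Record matroid (E : finType) := Matroid {
  indep : {set E} -> bool;
  indep0 : indep set0;
  indep_sub : forall I J : {set E}, J \subset I -> indep I -> indep J;
  indep_aug : forall I J : {set E}, indep I -> indep J -> #|I| < #|J| ->
      exists2 e, e \in J :\: I & indep (e |: I)
}.

Definition rank_of (E : finType) (ind : {set E} -> bool) (A : {set E}) : nat :=
  \max_(B : {set E} | (B \subset A) && ind B) #|B|.

Definition rk (E : finType) (M : matroid E) (A : {set E}) : nat := rank_of (indep M) A.
Definition rkM (E : finType) (M : matroid E) : nat := rk M [set: E].
Definition nullity (E : finType) (M : matroid E) (A : {set E}) : nat := #|A| - rk M A.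
Definition ranklack (E : finType) (M : matroid E) (A : {set E}) : nat := rkM M - rk M A.

(* The free product M [] N on the disjoint union S + T, given by its
   independent sets: A with A ∩ S independent in M and
   lambda_M(A ∩ S) >= nu_N(A ∩ T). *)
Definition free_prod_indep (S T : finType) (M : matroid S) (N : matroid T)
  (A : {set S + T}) : bool :=
  indep M (inl @^-1: A) && (nullity N (inr @^-1: A) <= ranklack M (inl @^-1: A)).

From mathcomp Require Import all_boot.
From mathcomp Require Import zify.
Set Implicit Arguments. Unset Strict Implicit. Unset Printing Implicit Defensive.

(* An independent set of M [] N inside A splits as I + K with I independent in
   M inside A ∩ S, K inside A ∩ T, and nu_N(K) <= lambda_M(I).  Writing
   |K| = rho_N(K) + nu_N(K), the count |I| + nu_N(K) is bounded both by
   rho_M(A ∩ S) + nu_N(A ∩ T) and by rho(M) = rho_M(A ∩ S) + lambda_M(A ∩ S).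
   Conversely, a basis of A ∩ S together with a basis of A ∩ T enlarged by
   min{lambda_M(A ∩ S), nu_N(A ∩ T)} further elements of A ∩ T attains the bound. *)

Section RankOf.
Variable E : finType.
Implicit Types (ind : {set E} -> bool) (A B : {set E}).

Lemma rank_of_le ind A m :
  (forall B, B \subset A -> ind B -> #|B| <= m) -> rank_of ind A <= m.
Proof. by move=> leBm; apply/bigmax_leqP => B /andP[]; apply: leBm. Qed.

Lemma leq_rank_of ind A B : B \subset A -> ind B -> #|B| <= rank_of ind A.
Proof.
move=> sBA indB.
by apply: (leq_bigmax_cond (P := fun B => (B \subset A) && ind B)); rewrite /= sBA.
Qed.

Lemma rank_of_witness ind A :
  ind set0 -> exists B, [/\ B \subset A, ind B & #|B| = rank_of ind A].
Proof.
move=> ind0; have P0 : (set0 \subset A) && ind set0 by rewrite sub0set.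
rewrite /rank_of (bigmax_eq_arg set0 P0).
by case: arg_maxnP => // B /andP[sBA indB] _; exists B.
Qed.

End RankOf.

Lemma subset_card_exists (E : finType) (A : {set E}) k :
  k <= #|A| -> exists2 D : {set E}, D \subset A & #|D| = k.
Proof.
rewrite -bin_gt0 -cards_draws => /card_gt0P[D].
by rewrite inE => /andP[sDA /eqP cardD]; exists D.
Qed.

Section MatroidRank.
Variables (E : finType) (M : matroid E).
Implicit Types (A B C I J : {set E}).

Lemma rk_le_card A : rk M A <= #|A|.
Proof. by apply: rank_of_le => B sBA _; apply: subset_leq_card. Qed.

Lemma rk_indep I : indep M I -> rk M I = #|I|.
Proof. by move=> indI; apply/eqP; rewrite eqn_leq rk_le_card leq_rank_of. Qed.

Lemma rk_basis A : exists I, [/\ I \subset A, indep M I & #|I| = rk M A].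
Proof. exact: rank_of_witness (indep0 M). Qed.

Lemma rkS A B : A \subset B -> rk M A <= rk M B.
Proof.
move=> sAB; have [I [sIA indI <-]] := rk_basis A.
exact: leq_rank_of (subset_trans sIA sAB) indI.
Qed.

Lemma rk_le_rkM A : rk M A <= rkM M.
Proof. exact: rkS (subsetT A). Qed.

Lemma nullityS A B : A \subset B -> nullity M A <= nullity M B.
Proof.
move=> sAB; have [I [sIB indI cardI]] := rk_basis B.
have cardIA : #|I :&: A| <= rk M A.
  by apply: leq_rank_of; [apply: subsetIr | apply: indep_sub indI; apply: subsetIl].
have cardID : #|I :\: A| <= #|B :\: A| by apply/subset_leq_card/setSD.
have := cardsID A I; have := cardsID A B; rewrite (setIidPr sAB).
have := rk_le_card A; have := rk_le_card B; rewrite /nullity; lia.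
Qed.

Lemma rk_between_basis J C A :
  J \subset C -> C \subset A -> indep M J -> #|J| = rk M A -> rk M C = #|J|.
Proof.
move=> sJC sCA indJ cardJ; apply/eqP; rewrite eqn_leq leq_rank_of // andbT cardJ.
exact: rkS.
Qed.

End MatroidRank.

Section FreeProductParts.
Variables (S T : finType) (M : matroid S) (N : matroid T).
Variables (X : {set S}) (Y : {set T}).

Lemma free_prod_parts_card_le (I : {set S}) (K : {set T}) :
  I \subset X -> K \subset Y -> indep M I -> nullity N K <= ranklack M I ->
  #|I| + #|K| <= rk M X + rk N Y + minn (ranklack M X) (nullity N Y).
Proof.
move=> sIX sKY indI nullK.
have cardIX : #|I| <= rk M X by rewrite -(rk_indep indI); apply: rkS.
have rkKY : rk N K <= rk N Y by apply: rkS.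
have nullKY : nullity N K <= nullity N Y by apply: nullityS.
have := rk_le_card N K; have := rk_le_rkM M X.
move: nullK nullKY; rewrite /nullity /ranklack (rk_indep indI); lia.
Qed.

Lemma free_prod_parts_card_attained :
  exists (I : {set S}) (K : {set T}), [/\ I \subset X, K \subset Y, indep M I,
    nullity N K <= ranklack M I &
    #|I| + #|K| = rk M X + rk N Y + minn (ranklack M X) (nullity N Y)].
Proof.
set k := minn (ranklack M X) (nullity N Y).
have [I [sIX indI cardI]] := rk_basis M X.
have [J [sJY indJ cardJ]] := rk_basis N Y.
have le_k_YJ : k <= #|Y :\: J|.
  by rewrite cardsD (setIidPr sJY) cardJ geq_minr.
have [D sDYJ cardD] := subset_card_exists le_k_YJ.
have /andP[sDY disjDJ] : (D \subset Y) && [disjoint D & J] by rewrite -subsetD.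
have cardJD : #|J :|: D| = #|J| + k.
  by rewrite cardsU setIC (disjoint_setI0 disjDJ) cards0 subn0 cardD.
have sJDY : J :|: D \subset Y by rewrite subUset sJY.
have rkJD : rk N (J :|: D) = #|J| := rk_between_basis (subsetUl J D) sJDY indJ cardJ.
exists I, (J :|: D); split=> //.
  by rewrite /nullity /ranklack rkJD cardJD (rk_indep indI) cardI addKn geq_minl.
by rewrite cardJD cardI cardJ addnA.
Qed.

End FreeProductParts.

Section SumSet.
Variables S T : finType.
Implicit Types (I : {set S}) (K : {set T}) (A B : {set S + T}).

Definition sum_set I K : {set S + T} :=
  [set x | match x with inl s => s \in I | inr t => t \in K end].

Lemma preim_inl_sum_set I K : inl @^-1: sum_set I K = I.
Proof. by apply/setP => s; rewrite !inE. Qed.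

Lemma preim_inr_sum_set I K : inr @^-1: sum_set I K = K.
Proof. by apply/setP => t; rewrite !inE. Qed.

Lemma sum_set_subset I K A :
  I \subset inl @^-1: A -> K \subset inr @^-1: A -> sum_set I K \subset A.
Proof.
move=> /subsetP sIA /subsetP sKA; apply/subsetP => -[s|t]; rewrite inE.
  by move/sIA; rewrite inE.
by move/sKA; rewrite inE.
Qed.

Lemma card_preimset_sum B : #|B| = #|inl @^-1: B| + #|inr @^-1: B|.
Proof.
rewrite -!sum1_card !(big_mkcond (fun x => x \in _)) big_sumType /=.
by congr (_ + _); apply: eq_bigr => x _; rewrite inE.
Qed.

End SumSet.

Theorem proposition3p4 (S T : finType) (M : matroid S) (N : matroid T)
  (A : {set S + T}) :
  rank_of (free_prod_indep M N) A =
    rk M (inl @^-1: A) + rk N (inr @^-1: A)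
    + minn (ranklack M (inl @^-1: A)) (nullity N (inr @^-1: A)).
Proof.
apply/eqP; rewrite eqn_leq; apply/andP; split.
  apply: rank_of_le => B sBA /andP[indB nullB].
  by rewrite card_preimset_sum free_prod_parts_card_le // preimsetS.
have [I [K [sIA sKA indI nullK <-]]] :=
  free_prod_parts_card_attained M N (inl @^-1: A) (inr @^-1: A).
have indIK : free_prod_indep M N (sum_set I K).
  by rewrite /free_prod_indep preim_inl_sum_set preim_inr_sum_set indI.
have := leq_rank_of (sum_set_subset sIA sKA) indIK.
by rewrite card_preimset_sum preim_inl_sum_set preim_inr_sum_set.
Qed.
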